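(* Let $p$ be a prime and $n$ a positive integer. Let $\mathcal M_{p^n}$ be a complete set of pairwise nonisomorphic $\Lambda$-modules $N$ such that $|N|=p^i$ and $|(1-t)N|=p^j$ with $2i-j\le n$ (over all such $i,j$). Then for each $N\in\mathcal M_{p^n}$ there exists a $\Lambda$-module $M_N\supseteq N$ with $|M_N|=p^n$ and $(1-t)M_N=N$, and for any such choice of the $M_N$, the family $\{(M_N,* ):N\in\mathcal M_{p^n}\}$ is a complete set of pairwise nonisomorphic Alexander quandles of order $p^n$.
   Context: $\Lambda=\mathbb Z[t,t^{-1}]$. A quandle is a set $Q$ with a binary operation $*$ such that for all $x,y,z\in Q$: $x*x=x$; $x\mapsto x*y$ is a permutation of $Q$; $(x*y)*z=(x*z)*(y*z)$. Quandles are isomorphic if there is a bijection preserving $*$. The Alexander quandle of a $\Lambda$-module $M$ is $(M,* )$ with $x*y=tx+(1-t)y$. *)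

From HB Require Import structures.
From mathcomp Require Import all_boot all_order all_algebra.
Set Implicit Arguments. Unset Strict Implicit. Unset Printing Implicit Defensive.
Import GRing.Theory.
Local Open Scope ring_scope.

(* A finite Lambda-module, Lambda = Z[t,t^-1]: a finite abelian group with an
   additive automorphism t. *)
Record LMod := LModPack {
  lcar :> finZmodType;
  tmap : lcar -> lcar;
  tmap_add : forall x y : lcar, tmap (x + y) = tmap x + tmap y;
  tmap_bij : bijective tmap }.

Definition omt (M : LMod) (x : lcar M) : lcar M := x - tmap x.

Definition imB (M : LMod) : {set lcar M} := [set omt x | x : lcar M].

Definition lhom (M N : LMod) (f : lcar M -> lcar N) : Prop :=
  (forall x y, f (x + y) = f x + f y) /\ (forall x, f (tmap x) = tmap (f x)).

Definition liso (M N : LMod) : Prop :=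
  exists f : lcar M -> lcar N, lhom f /\ bijective f.

Definition alex (M : LMod) (x y : lcar M) : lcar M := tmap x + omt y.

Definition qiso (A B : Type) (opA : A -> A -> A) (opB : B -> B -> B) : Prop :=
  exists f : A -> B, bijective f /\ forall x y, f (opA x y) = opB (f x) (f y).

Definition Mcond (p n : nat) (N : LMod) : Prop :=
  exists i j : nat, #|lcar N| = (p ^ i)%N /\ #|imB N| = (p ^ j)%N /\ (2 * i <= n + j)%N.

Definition complete_Mset (p n : nat) (I : Type) (N : I -> LMod) : Prop :=
  [/\ forall i, Mcond p n (N i),
      forall X : LMod, Mcond p n X -> exists i, liso X (N i)
    & forall i j, liso (N i) (N j) -> i = j].

Definition good_ext (p n : nat) (N M : LMod) (f : lcar N -> lcar M) : Prop :=
  [/\ lhom f, injective f, #|lcar M| = (p ^ n)%N & f @: [set: lcar N] = imB M].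

From HB Require Import structures.
From mathcomp Require Import all_boot all_order all_algebra fingroup cyclic.
From mathcomp Require Import zify.
Set Implicit Arguments. Unset Strict Implicit. Unset Printing Implicit Defensive.
Import GRing.Theory FinRing.Theory.
Local Open Scope ring_scope.

(* Write B M := (1-t)M. The proof rests on three facts.
   1. For |M| = |M'|, the Alexander quandles on M and M' are isomorphic iff
      B M and B M' are isomorphic Lambda-modules. A quandle isomorphism,
      shifted to fix 0, restricts to such a module isomorphism
      [qiso_imB_iso]. Conversely, a module isomorphism g : B M -> B M' extends,
      one coset of B M at a time, to a bijection F with F (x + b) = F x + g b
      and (1-t) (F x) = g ((1-t) x), which is a quandle isomorphism
      [qiso_of_imB_iso]; each extension step counts fibres of 1 - t.
   2. Every finite Lambda-module N is B M for some M of order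
      |N| |ker_N (1-t)| q, for any q > 0 [exists_ext]: the endomorphism 1 - t
      of N is lifted, by successive cyclic extensions, to a surjection
      sg : G -> N from an abelian group G containing N, with the same kernel;
      then G x Z/q becomes a Lambda-module with t u := u - sg u.
   3. If |X| = p^n then N := B X satisfies |N|^2 <= p^n |B N| [card_imB_sq],
      i.e. N lies in the family M_{p^n}.
   The corollary follows: 2 builds M_N; by 1, quandle isomorphic M_N have
   isomorphic N = B M_N; by 3 and 1, every X of order p^n is quandle
   isomorphic to M_N for the N isomorphic to B X. *)

Section AdditiveMaps.
Variables (A B : zmodType) (phi : A -> B).
Hypothesis phiD : forall x y, phi (x + y) = phi x + phi y.

Lemma additive0 : phi 0 = 0.
Proof. by apply/(addrI (phi 0)); rewrite -phiD !addr0. Qed.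

Lemma additiveN x : phi (- x) = - phi x.
Proof. by apply/(addrI (phi x)); rewrite -phiD !subrr additive0. Qed.

Lemma additiveB x y : phi (x - y) = phi x - phi y.
Proof. by rewrite phiD additiveN. Qed.

Lemma additiveMn x k : phi (x *+ k) = phi x *+ k.
Proof. by elim: k => [|k IH]; rewrite ?mulr0n ?additive0 // !mulrS phiD IH. Qed.
End AdditiveMaps.

Section AdditiveCounting.
Variables (A B : finZmodType) (phi : A -> B).
Hypothesis phiD : forall x y, phi (x + y) = phi x + phi y.

(* Every fibre of an additive map is a translate of its kernel. *)
Lemma card_additive_fibre a :
  #|[set x | phi x == phi a]| = #|[set x | phi x == 0]|.
Proof.
have -> : [set x | phi x == 0] = [set x - a | x in [set x | phi x == phi a]].
  apply/setP => z; rewrite inE; apply/eqP/imsetP => [pz | [x]].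
    by exists (z + a); rewrite ?addrK // inE phiD pz add0r.
  by rewrite inE => /eqP px ->; rewrite (additiveB phiD) px subrr.
by rewrite card_imset //; apply: addIr.
Qed.

Lemma card_additive_dom :
  #|A| = (#|phi @: setT| * #|[set x | phi x == 0%R]|)%N.
Proof.
rewrite -cardsT -sum1_card (partition_big_imset phi) /= -sum_nat_const.
apply: eq_bigr => _ /imsetP [a _ ->].
by rewrite -(card_additive_fibre a) -sum1_card; apply: eq_bigl => x; rewrite !inE.
Qed.
End AdditiveCounting.

Lemma mulr_card (A : finZmodType) (x : A) : x *+ #|A| = 0.
Proof. by rewrite -zmodXgE -cardsT expg_cardG ?inE. Qed.

(* Carries when adding three digits in base m. *)
Lemma carry_sum (m a b e : nat) : (0 < m)%N ->
  ((a + b) %/ m + ((a + b) %% m + e) %/ m = (a + b + e) %/ m)%N.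
Proof. by move=> m0; rewrite {3}(divn_eq (a + b) m) -addnA divnMDl. Qed.

Lemma carry_assoc (m a b e : nat) : (0 < m)%N ->
  ((a + b) %/ m + ((a + b) %% m + e) %/ m = (a + (b + e) %% m) %/ m + (b + e) %/ m)%N.
Proof.
move=> m0; rewrite carry_sum // [RHS]addnC [(a + _ %% _)%N]addnC carry_sum //.
by rewrite [(b + e + a)%N]addnC addnA.
Qed.

(* The cyclic extension of M by an m-th root of w (m = d.+1): the abelian group
   of formal sums x + a z (x in M, 0 <= a < m) with m z = w, i.e. M x 'I_m
   with carry w. The parameter w only serves to carry the group structure. *)
Definition cyc_ext (M : finZmodType) (d : nat) (w : M) : Type := (M * 'I_d.+1)%type.

Section CyclicExtension.
Variables (M : finZmodType) (d : nat) (w : M).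
Local Notation m := d.+1.
Local Notation E := (cyc_ext d w).
HB.instance Definition _ := Finite.copy E (M * 'I_m)%type.

Definition cext_add (u v : E) : E :=
  (u.1 + v.1 + w *+ ((u.2 + v.2) %/ m), Ordinal (ltn_pmod (u.2 + v.2) (ltn0Sn d))).
Definition cext_zero : E := (0, ord0).
Definition cext_opp (u : E) : E :=
  (- u.1 - w *+ (0 < u.2)%N, Ordinal (ltn_pmod (m - u.2) (ltn0Sn d))).

Lemma cext_addA : associative cext_add.
Proof.
move=> [x a] [y b] [z e]; rewrite /cext_add /=; congr (_, _); last first.
  by apply: val_inj => /=; rewrite modnDml modnDmr addnA.
rewrite -[LHS]addrA -[in LHS]addrA -mulrnDr [(_ %/ m + _)%N]addnC -carry_assoc //.
by rewrite mulrnDr !addrA (addrAC _ z).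
Qed.

Lemma cext_addC : commutative cext_add.
Proof.
move=> [x a] [y b]; rewrite /cext_add /= (addrC x) addnC.
by congr (_, _); apply: val_inj.
Qed.

Lemma cext_add0 : left_id cext_zero cext_add.
Proof.
move=> [x a]; rewrite /cext_add /= add0r add0n divn_small // mulr0n addr0.
by congr (_, _); apply: val_inj; rewrite /= modn_small.
Qed.

Lemma cext_addN : left_inverse cext_zero cext_opp cext_add.
Proof.
move=> [x a]; rewrite /cext_add /cext_opp /cext_zero /=.
have [->|a_gt0] := posnP a.
  by rewrite subn0 modnn div0n !mulr0n subr0 addr0 addNr; congr (_, _); apply: val_inj.
have ma : ((m - a) %% m + a = m)%N.
  by rewrite modn_small ?ltn_subrL ?a_gt0 // subnK // ltnW.
congr (_, _); last by apply: val_inj; rewrite /= ma modnn.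
by rewrite ma divnn mulr1n addrAC subrK addNr.
Qed.

HB.instance Definition _ :=
  GRing.isZmodule.Build E cext_addA cext_addC cext_add0 cext_addN.

Lemma cext_addE (u v : E) : u + v = cext_add u v.
Proof. by []. Qed.

Definition cext_in (x : M) : E := (x, ord0).

Lemma card_cext : #|{: E}| = (#|M| * m)%N.
Proof. by rewrite card_prod card_ord. Qed.

Lemma cext_inD x y : cext_in (x + y) = cext_in x + cext_in y.
Proof.
rewrite cext_addE /cext_add /= div0n mulr0n addr0.
by congr (_, _); apply: val_inj.
Qed.

Lemma cext_in_inj : injective cext_in.
Proof. by move=> x y []. Qed.

(* Universal property: an additive sg on M, together with a value y for z
   satisfying m y = sg w, extends additively to x + a z |-> sg x + a y. *)
Lemma cext_liftD (V : zmodType) (sg : M -> V) (y : V) :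
  (forall a b, sg (a + b) = sg a + sg b) -> sg w = y *+ m ->
  forall u v : E, sg (u + v).1 + y *+ (u + v).2 =
     (sg u.1 + y *+ u.2) + (sg v.1 + y *+ v.2).
Proof.
move=> sgD sgw [x a] [x' b]; rewrite cext_addE /cext_add /= !sgD.
rewrite (additiveMn sgD) sgw -mulrnA -addrA -mulrnDr mulnC -divn_eq.
by rewrite mulrnDr addrACA.
Qed.
End CyclicExtension.

(* If y is outside a set L containing 0, some least multiple y *+ d.+1 (d > 0)
   lies in L; it exists because y *+ #|N| = 0. *)
Lemma least_multiple_in (N : finZmodType) (L : {set N}) (y : N) :
  0 \in L -> y \notin L ->
  exists d, [/\ (0 < d)%N, y *+ d.+1 \in L &
              forall k, (0 < k <= d)%N -> y *+ k \notin L].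
Proof.
move=> L0 yL.
have ex_mult : exists k, (0 < k)%N && (y *+ k \in L).
  by exists #|N|; rewrite mulr_card L0 andbT; apply/card_gt0P; exists 0.
case: (ex_minnP ex_mult) => -[|d] // /andP[_ ydL] dmin.
exists d; split => //; last first.
  move=> k /andP[k_gt0 kd]; apply: contraTN kd => ykL.
  by rewrite -ltnNge; apply: dmin; rewrite k_gt0.
by case: d ydL dmin => // /[!mulr1n]; rewrite (negbTE yL).
Qed.

Lemma cext_lift_ker (G N : finZmodType) (d : nat) (w : G) (sg : G -> N) (y : N) :
  (forall a b, sg (a + b) = sg a + sg b) ->
  (forall k, (0 < k <= d)%N -> y *+ k \notin sg @: setT) ->
  [set u : cyc_ext d w | sg u.1 + y *+ u.2 == 0] = cext_in d w @: [set x | sg x == 0].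
Proof.
move=> sgD y_out; apply/setP => -[x a]; rewrite inE /=.
apply/eqP/imsetP => [sgu0 | [x']]; last first.
  by rewrite inE => /eqP sgx0 [-> ->]; rewrite /= mulr0n addr0.
suff a0 : nat_of_ord a = 0%N.
  exists x; first by rewrite inE -sgu0 a0 mulr0n addr0.
  by congr (_, _); apply: val_inj.
apply/eqP; rewrite -leqn0 leqNgt; apply/negP => a_gt0.
have a_le_d : (0 < a <= d)%N by rewrite a_gt0 -ltnS ltn_ord.
apply: (negP (y_out a a_le_d)); apply/imsetP; exists (- x) => //.
by rewrite (additiveN sgD); apply/eqP; rewrite -addr_eq0 addrC sgu0.
Qed.

Section SurjectiveLift.
Variables (N : finZmodType) (s : N -> N).
Hypothesis sD : forall x y, s (x + y) = s x + s y.

Definition lifts (G : finZmodType) (f : N -> G) (sg : G -> N) : Prop :=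
  [/\ forall x y, f (x + y) = f x + f y, injective f,
      forall x y, sg (x + y) = sg x + sg y, forall x, sg (f x) = s x &
      #|[set u | sg u == 0]| = #|[set x | s x == 0]|].

(* A lift that is not onto can be enlarged: adjoin a root z of m z = w, where
   y is outside the image and m is least with m y = sg w, and send z to y. *)
Lemma lifts_step (G : finZmodType) f sg : @lifts G f sg -> sg @: setT != setT ->
  exists (G1 : finZmodType) (f1 : N -> G1) (sg1 : G1 -> N),
    lifts f1 sg1 /\ (#|sg @: setT| < #|sg1 @: setT|)%N.
Proof.
move=> [fD finj sgD sgf hker] img_ne; set L := sg @: setT.
have /subsetPn [y _ yL] : ~~ ([set: N] \subset L) by rewrite subTset.
have L0 : 0 \in L by apply/imsetP; exists 0; rewrite ?(additive0 sgD).
have [d [d_gt0 /imsetP [w _ sgw] dmin]] := least_multiple_in L0 yL.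
pose sg1 (u : cyc_ext d w) := sg u.1 + y *+ u.2.
have sg1D : forall u v, sg1 (u + v) = sg1 u + sg1 v.
  by apply: cext_liftD.
have ker1 := cext_lift_ker w sgD dmin.
exists (cyc_ext d w), (fun x => cext_in d w (f x)), sg1; split; first split.
- by move=> a b; rewrite fD cext_inD.
- by move=> a b /cext_in_inj /finj.
- exact: sg1D.
- by move=> x; rewrite /sg1 /= addr0 sgf.
- by rewrite ker1 card_imset -?hker //; exact: cext_in_inj.
apply: proper_card; apply/properP; split.
  apply/subsetP => _ /imsetP [x _ ->]; apply/imsetP; exists (cext_in d w x) => //.
  by rewrite /sg1 /= addr0.
exists y => //; apply/imsetP; exists (0, Ordinal (d_gt0 : (1 < d.+1)%N)) => //.
by rewrite /sg1 /= (additive0 sgD) add0r mulr1n.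
Qed.

Lemma lifts_onto : exists (G : finZmodType) (f : N -> G) (sg : G -> N),
  lifts f sg /\ sg @: setT = setT.
Proof.
suff grow k (G : finZmodType) f (sg : G -> N) : lifts f sg ->
    (#|N| - #|sg @: setT| < k)%N ->
    exists (G1 : finZmodType) (f1 : N -> G1) (sg1 : G1 -> N),
      lifts f1 sg1 /\ sg1 @: setT = setT.
  by apply: (grow _ N id s) => //; split.
elim: k G f sg => // k IH G f sg hf hk.
have [onto | not_onto] := eqVneq (sg @: setT) setT; first by exists G, f, sg.
have [G1 [f1 [sg1 [hf1 grows]]]] := lifts_step hf not_onto.
have img_le : (#|sg1 @: setT| <= #|N|)%N by exact: max_card.
by apply: (IH _ _ _ hf1); lia.
Qed.
End SurjectiveLift.

Definition kerB (M : LMod) : {set lcar M} := [set x | omt x == 0].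

Section LModBasics.
Variable M : LMod.
Implicit Types x y : lcar M.

Lemma tmapD x y : tmap (x + y) = tmap x + tmap y. Proof. exact: tmap_add. Qed.
Lemma tmap0 : tmap (0 : lcar M) = 0. Proof. exact: additive0 tmapD. Qed.
Lemma tmapB x y : tmap (x - y) = tmap x - tmap y.
Proof. by rewrite (additiveB tmapD). Qed.
Lemma tmap_inj : injective (@tmap M). Proof. exact: bij_inj (tmap_bij M). Qed.

Lemma omtD x y : omt (x + y) = omt x + omt y.
Proof. by rewrite /omt tmapD opprD addrACA. Qed.
Lemma omt0 : omt (0 : lcar M) = 0. Proof. exact: additive0 omtD. Qed.
Lemma omtN x : omt (- x) = - omt x. Proof. by rewrite (additiveN omtD). Qed.
Lemma omtB x y : omt (x - y) = omt x - omt y. Proof. by rewrite (additiveB omtD). Qed.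
Lemma omt_tmap x : omt (tmap x) = tmap (omt x). Proof. by rewrite /omt tmapB. Qed.
Lemma tmapE x : tmap x = x - omt x. Proof. by rewrite /omt opprB addrC subrK. Qed.

Lemma imBP y : reflect (exists x, y = omt x) (y \in imB M).
Proof. by apply: (iffP imsetP) => [[x _ ->]|[x ->]]; exists x. Qed.
Lemma imB_omt x : omt x \in imB M. Proof. by apply/imBP; exists x. Qed.
Lemma imB0 : 0 \in imB M. Proof. by rewrite -omt0 imB_omt. Qed.
Lemma imBD : {in imB M &, forall x y, x + y \in imB M}.
Proof. by move=> x y /imBP[a ->] /imBP[b ->]; rewrite -omtD imB_omt. Qed.
Lemma imBN : {in imB M, forall x, - x \in imB M}.
Proof. by move=> x /imBP[a ->]; rewrite -omtN imB_omt. Qed.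
Lemma imBB : {in imB M &, forall x y, x - y \in imB M}.
Proof. by move=> x y xB yB; rewrite imBD ?imBN. Qed.
Lemma imBt : {in imB M, forall x, tmap x \in imB M}.
Proof. by move=> x /imBP[a ->]; rewrite -omt_tmap imB_omt. Qed.

Lemma card_lmod : #|lcar M| = (#|imB M| * #|kerB M|)%N.
Proof.
rewrite (card_additive_dom omtD); congr (_ * _)%N.
by apply: eq_card => z; apply/imsetP/imsetP => -[x _ ->]; exists x.
Qed.

Lemma card_omt_fibre x : #|[set y | omt y == omt x]| = #|kerB M|.
Proof. by rewrite (card_additive_fibre omtD). Qed.
End LModBasics.

Definition imB_iso (M M' : LMod) (g : lcar M -> lcar M') : Prop :=
  [/\ {in imB M &, forall x y, g (x + y) = g x + g y},
      {in imB M, forall x, g (tmap x) = tmap (g x)},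
      {in imB M &, injective g} &
      g @: imB M = imB M'].

Section AlexanderOperation.
Variable M : LMod.
Implicit Types x y c : lcar M.

Lemma alex_x0 x : alex x 0 = tmap x. Proof. by rewrite /alex omt0 addr0. Qed.
Lemma alex_0y y : alex 0 y = omt y. Proof. by rewrite /alex tmap0 add0r. Qed.

Lemma alex_subr x y c : alex (x - c) (y - c) = alex x y - c.
Proof.
have tc : tmap c + omt c = c by rewrite tmapE subrK.
by rewrite /alex tmapB omtB addrACA -opprD tc.
Qed.
End AlexanderOperation.

(* A quandle isomorphism, shifted to fix 0, commutes with t and 1 - t and is
   additive along (1-t)M, since x * y = t x + (1-t) y: it restricts to an
   isomorphism of the submodules (1-t)M. *)
Lemma qiso_imB_iso (M M' : LMod) :
  qiso (@alex M) (@alex M') -> exists g, @imB_iso M M' g.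
Proof.
case=> F [[Finv FK FK'] Fh]; pose F0 x := F x - F 0.
have F0h x y : F0 (alex x y) = alex (F0 x) (F0 y) by rewrite /F0 Fh alex_subr.
have F00 : F0 0 = 0 by rewrite /F0 subrr.
have F0t x : F0 (tmap x) = tmap (F0 x) by rewrite -alex_x0 F0h F00 alex_x0.
have F0omt y : F0 (omt y) = omt (F0 y) by rewrite -alex_0y F0h F00 alex_0y.
have F0D a b : b \in imB M -> F0 (a + b) = F0 a + F0 b.
  have [tinv _ tK] := tmap_bij M.
  by move=> /imBP[y ->]; rewrite -[a]tK -[_ + omt y]/(alex _ y) F0h F0t F0omt.
have F0_inj : injective F0 by move=> x y /addIr /(can_inj FK).
exists F0; split.
- by move=> x y _; apply: F0D.
- by move=> x _; apply: F0t.
- by move=> x y _ _; apply: F0_inj.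
apply/setP => z; apply/imsetP/imBP => [[_ /imBP[y ->] ->] | [x ->]].
  by exists (F0 y); rewrite F0omt.
by exists (omt (Finv (x + F 0))); rewrite ?imB_omt // F0omt /F0 FK' addrK.
Qed.

Section ExtendImBIso.
Variables (M M' : LMod) (g : lcar M -> lcar M').
Hypothesis card_eq : #|lcar M| = #|lcar M'|.
Hypothesis g_iso : imB_iso g.

Lemma imB_iso_D : {in imB M &, forall x y, g (x + y) = g x + g y}.
Proof. by case: g_iso. Qed.

Lemma imB_iso_inj : {in imB M &, injective g}.
Proof. by case: g_iso. Qed.

Lemma imB_iso_N : {in imB M, forall x, g (- x) = - g x}.
Proof.
move=> x xB; have g0 : g 0 = 0.
  by apply/(addrI (g 0)); rewrite -imB_iso_D ?imB0 // !addr0.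
by apply/(addrI (g x)); rewrite -imB_iso_D ?imBN // !subrr.
Qed.

Lemma imB_iso_B : {in imB M &, forall x y, g (x - y) = g x - g y}.
Proof. by move=> x y xB yB; rewrite imB_iso_D ?imBN // imB_iso_N. Qed.

Lemma imB_iso_omt : {in imB M, forall x, g (omt x) = omt (g x)}.
Proof.
case: g_iso => _ gt _ _ x xB.
by rewrite /omt imB_iso_B ?imBt // gt.
Qed.

Lemma imB_iso_in x : x \in imB M -> g x \in imB M'.
Proof. by case: g_iso => _ _ _ <- xB; apply: imset_f. Qed.

(* Since |(1-t)M| = |(1-t)M'| and |M| = |M'|, the kernels of 1 - t match. *)
Lemma card_kerB_eq : #|kerB M| = #|kerB M'|.
Proof.
have cB : #|imB M| = #|imB M'|.
  by case: g_iso => _ _ g_inj <-; rewrite card_in_imset.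
apply/eqP; rewrite -(eqn_pmul2l (_ : 0 < #|imB M|)%N); last first.
  by apply/card_gt0P; exists 0; apply: imB0.
by rewrite -card_lmod cB -card_lmod card_eq.
Qed.

Definition coset_ext (A : {set lcar M}) (f : lcar M -> lcar M') : Prop :=
  [/\ {in A, forall x b, b \in imB M -> x + b \in A},
      {in A, forall x b, b \in imB M -> f (x + b) = f x + g b},
      {in A, forall x, omt (f x) = g (omt x)} &
      {in A &, injective f}].

(* For a outside A, the fibre of 1 - t over g ((1-t) a) is not yet exhausted by
   f, since it has as many points as the fibre of a, which meets A partly. *)
Lemma coset_ext_fresh A f a : coset_ext A f -> a \notin A ->
  exists2 a', omt a' = g (omt a) & a' \notin f @: A.
Proof.
move=> [_ _ f_omt f_inj] aA.
set F := [set x | omt x == omt a]; set F' := [set x' | omt x' == g (omt a)].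
suff [a' a'F' a'_new] : exists2 a', a' \in F' & a' \notin f @: A.
  by exists a' => //; apply/eqP; rewrite /F' inE in a'F'.
apply/exists_inP; apply: contraT; rewrite negb_exists_in => /forall_inP F'_in.
have F'_sub : F' \subset f @: (F :&: A).
  apply/subsetP => x' x'F'; have /negbNE/imsetP [x xA x'E] := F'_in x' x'F'.
  move: x'F'; rewrite x'E /F' inE f_omt // => /eqP omt_eq.
  apply: imset_f; rewrite !inE xA andbT.
  by apply/eqP/imB_iso_inj; rewrite ?imB_omt.
have FA_lt : (#|F :&: A| < #|F|)%N.
  apply: proper_card; apply/properP; split; first exact: subsetIl.
  by exists a; rewrite !inE ?eqxx // (negbTE aA) andbF.
have cF : #|F| = #|F'|.
  rewrite /F /F'; have /imBP [x0 ->] := imB_iso_in (imB_omt a).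
  by rewrite !card_omt_fibre card_kerB_eq.
have := leq_trans (subset_leq_card F'_sub) (leq_imset_card _ _).
by rewrite -cF leqNgt FA_lt.
Qed.

Definition coset_extend (A : {set lcar M}) f a a' (x : lcar M) : lcar M' :=
  if x \in A then f x else a' + g (x - a).

Lemma coset_ext_grow A f a a' : coset_ext A f -> a \notin A ->
  omt a' = g (omt a) -> a' \notin f @: A ->
  coset_ext (A :|: [set x | x - a \in imB M]) (coset_extend A f a a').
Proof.
move=> [A_closed fD f_omt f_inj] aA a'_omt a'_new.
have CA x : x - a \in imB M -> x \notin A.
  move=> xa; apply: contraNN aA => xA; rewrite -[a](addrNK x) addrC A_closed //.
  by rewrite -opprB imBN.
have extA x : x \in A -> coset_extend A f a a' x = f x.
  by move=> xA; rewrite /coset_extend xA.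
have extC x : x - a \in imB M -> coset_extend A f a a' x = a' + g (x - a).
  by move=> xa; rewrite /coset_extend (negbTE (CA x xa)).
have xbC x b : x - a \in imB M -> b \in imB M -> x + b - a \in imB M.
  by move=> xa bB; rewrite addrAC imBD.
have AC_ne x y : x \in A -> y - a \in imB M -> f x != a' + g (y - a).
  move=> xA ya; apply: contraNneq a'_new => fx; apply/imsetP.
  exists (x - (y - a)); first by rewrite A_closed // imBN.
  by rewrite fD ?imBN // imB_iso_N // fx addrK.
split=> [x | x | x | x y]; rewrite ?inE.
- by case/orP=> [xA | xa] b bB; rewrite !inE; [rewrite A_closed | rewrite xbC ?orbT].
- case/orP=> [xA | xa] b bB; first by rewrite !extA ?A_closed ?fD.
  by rewrite !extC ?xbC // addrAC imB_iso_D // addrA.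
- case/orP=> [xA | xa]; first by rewrite extA ?f_omt.
  rewrite extC // omtD a'_omt -imB_iso_omt // -imB_iso_D ?imB_omt //.
  by rewrite -omtD addrC subrK.
case/orP=> [xA | xa] /orP[yA | ya].
- by rewrite !extA //; apply: f_inj.
- by rewrite extA // extC // => /eqP; rewrite (negbTE (AC_ne x y xA ya)).
- by rewrite (extA y) // extC // => /esym/eqP; rewrite (negbTE (AC_ne y x yA xa)).
by rewrite !extC // => /addrI /imB_iso_inj; move/(_ xa ya)/addIr.
Qed.

Lemma coset_ext_total : exists f, coset_ext setT f.
Proof.
suff grow k A f : coset_ext A f -> (#|~: A| < k)%N -> exists f, coset_ext setT f.
  by apply: (grow _ set0 (fun _ => 0)) => //; split=> x; rewrite inE.
elim: k A f => // k IH A f hf hk.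
have [A_full | A_ne] := eqVneq A setT; first by exists f; rewrite -A_full.
have /subsetPn [a _ aA] : ~~ ([set: lcar M] \subset A) by rewrite subTset.
have [a' a'_omt a'_new] := coset_ext_fresh hf aA.
apply: IH (coset_ext_grow hf aA a'_omt a'_new) _.
rewrite -ltnS (leq_trans _ hk) // ltnS; apply: proper_card; apply/properP; split.
  by apply/subsetP => x; rewrite !inE negb_or => /andP[].
by exists a; rewrite !inE ?aA // subrr imB0 orbT.
Qed.

(* Such an extension is a quandle isomorphism: x * y = x + (1-t)(y - x). *)
Lemma qiso_of_imB_iso : qiso (@alex M) (@alex M').
Proof.
have [f [_ fD f_omt f_inj]] := coset_ext_total.
exists f; split.
  apply: inj_card_bij; last by rewrite card_eq.
  by move=> x y; apply: f_inj; rewrite inE.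
move=> x y; have yx_in : omt y - omt x \in imB M by rewrite imBB ?imB_omt.
rewrite /alex !tmapE addrAC -addrA fD ?in_setT // imB_iso_B ?imB_omt //.
by rewrite -!f_omt ?in_setT // addrA addrAC.
Qed.
End ExtendImBIso.

Definition emb (N M : LMod) (f : lcar N -> lcar M) : Prop :=
  [/\ lhom f, injective f & f @: setT = imB M].

Section Embedding.
Variables (N M : LMod) (f : lcar N -> lcar M).
Hypothesis f_emb : emb f.

Lemma emb_D x y : f (x + y) = f x + f y. Proof. by case: f_emb => -[]. Qed.
Lemma emb_t x : f (tmap x) = tmap (f x). Proof. by case: f_emb => -[]. Qed.
Lemma emb_inj : injective f. Proof. by case: f_emb. Qed.
Lemma emb_omt x : f (omt x) = omt (f x).
Proof. by rewrite /omt (additiveB emb_D) emb_t. Qed.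

Lemma emb_imP y : reflect (exists x, y = f x) (y \in imB M).
Proof.
case: f_emb => _ _ <-.
by apply: (iffP imsetP) => [[x _ ->] | [x ->]]; exists x.
Qed.

Lemma emb_in x : f x \in imB M. Proof. by apply/emb_imP; exists x. Qed.

Lemma emb_card : #|lcar N| = #|imB M|.
Proof. by case: f_emb => _ f_inj <-; rewrite card_imset // cardsT. Qed.

Definition emb_inv (y : lcar M) : lcar N := odflt 0 [pick x | f x == y].

Lemma emb_invK y : y \in imB M -> f (emb_inv y) = y.
Proof.
case/emb_imP=> x ->; rewrite /emb_inv.
by case: pickP => [x' /eqP // | /(_ x)]; rewrite eqxx.
Qed.
End Embedding.

Lemma liso_of_imB_iso (N M N' M' : LMod) (fN : lcar N -> lcar M)
    (fN' : lcar N' -> lcar M') (g : lcar M -> lcar M') :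
  emb fN -> emb fN' -> imB_iso g -> liso N N'.
Proof.
move=> eN eN' g_iso; pose h x := emb_inv fN' (g (fN x)).
have hE x : fN' (h x) = g (fN x).
  by rewrite (emb_invK eN') ?(imB_iso_in g_iso) ?(emb_in eN).
case: (g_iso) => gD gt g_inj g_im.
exists h; split; first split.
- move=> x y; apply: (emb_inj eN').
  by rewrite (emb_D eN') !hE (emb_D eN) gD ?(emb_in eN).
- by move=> x; apply: (emb_inj eN'); rewrite (emb_t eN') !hE (emb_t eN) gt ?(emb_in eN).
apply: inj_card_bij.
  move=> x y /(congr1 fN'); rewrite !hE => /g_inj.
  by move=> /(_ (emb_in eN x) (emb_in eN y)) /(emb_inj eN).
by rewrite (emb_card eN) (emb_card eN') -g_im card_in_imset.
Qed.

Lemma imB_iso_of_liso (N M N' M' : LMod) (fN : lcar N -> lcar M)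
    (fN' : lcar N' -> lcar M') :
  emb fN -> emb fN' -> liso N N' -> exists g : lcar M -> lcar M', imB_iso g.
Proof.
move=> eN eN' [phi [[phiD phit] [phi_inv phiK phiK']]].
pose g y := fN' (phi (emb_inv fN y)).
have gE x : g (fN x) = fN' (phi x).
  rewrite /g; congr (fN' (phi _)); apply: (emb_inj eN).
  by rewrite (emb_invK eN) ?(emb_in eN).
exists g; split.
- move=> _ _ /(emb_imP eN)[x ->] /(emb_imP eN)[y ->].
  by rewrite -(emb_D eN) !gE phiD (emb_D eN').
- by move=> _ /(emb_imP eN)[x ->]; rewrite -(emb_t eN) !gE phit (emb_t eN').
- move=> _ _ /(emb_imP eN)[x ->] /(emb_imP eN)[y ->]; rewrite !gE.
  by move=> /(emb_inj eN') /(can_inj phiK) ->.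
apply/setP => y'; apply/imsetP/(emb_imP eN') => [[_ /(emb_imP eN)[x ->] ->] | [x' ->]].
  by exists (phi x); rewrite gE.
by exists (fN (phi_inv x')); rewrite ?(emb_in eN) // gE phiK'.
Qed.

Section TwistedModule.
Variables (N : LMod) (G : finZmodType) (f : lcar N -> G) (sg : G -> lcar N).
Hypotheses (fD : forall x y, f (x + y) = f x + f y)
           (sgD : forall u v, sg (u + v) = sg u + sg v)
           (sgf : forall x, sg (f x) = omt x).

Definition twist (u : G) : G := u - f (sg u).

Lemma twistD u v : twist (u + v) = twist u + twist v.
Proof. by rewrite /twist sgD fD opprD addrACA. Qed.

(* If u = f (sg u) then sg u = (1-t) (sg u), so t (sg u) = 0 and u = 0. *)
Lemma twist_inj : injective twist.
Proof.
move=> u v uv; apply/eqP; rewrite -subr_eq0; apply/eqP.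
have : twist (u - v) = 0 by rewrite (additiveB twistD) uv subrr.
move: (u - v) => z /eqP; rewrite subr_eq0 => /eqP z_fix.
have : tmap (sg z) = tmap 0 by rewrite tmap0 tmapE -[in X in _ - X]sgf -z_fix subrr.
by move=> /tmap_inj sgz0; rewrite z_fix sgz0 (additive0 fD).
Qed.

Definition twisted : LMod := LModPack twistD (injF_bij twist_inj).

Lemma omt_twisted (u : lcar twisted) : omt u = f (sg u).
Proof. by rewrite /omt /= /twist opprB addrC subrK. Qed.

Lemma twisted_emb : injective f -> sg @: setT = setT ->
  emb (f : lcar N -> lcar twisted).
Proof.
move=> f_inj sg_onto; split => //.
  by split=> // x; rewrite /= /twist sgf -(additiveB fD) -tmapE.
apply/setP => u; apply/imsetP/imBP => [[x _ ->] | [v ->]].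
  have : x \in sg @: setT by rewrite sg_onto.
  by case/imsetP => v _ ->; exists v; rewrite omt_twisted.
by exists (sg v); rewrite ?omt_twisted.
Qed.
End TwistedModule.

(* Realization: every finite Lambda-module N is (1-t)M for some M of order
   |N| |ker_N (1-t)| q, any q > 0: lift 1 - t to a surjection sg : G -> N,
   take G x Z/q and twist. *)
Lemma exists_ext (N : LMod) (q : nat) : (0 < q)%N ->
  exists (M : LMod) (f : lcar N -> lcar M),
    emb f /\ #|lcar M| = (#|lcar N| * #|kerB N| * q)%N.
Proof.
move=> q_gt0.
have [G [f [sg [[fD f_inj sgD sgf ker_sg] sg_onto]]]] := lifts_onto (@omtD N).
pose f2 x : cyc_ext q.-1 (0 : G) := cext_in q.-1 0 (f x).
pose sg2 (u : cyc_ext q.-1 (0 : G)) := sg u.1.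
have f2D x y : f2 (x + y) = f2 x + f2 y by rewrite /f2 fD cext_inD.
have sg2D u v : sg2 (u + v) = sg2 u + sg2 v.
  have sg0 : sg 0 = 0 *+ q.-1.+1 by rewrite mul0rn (additive0 sgD).
  by have := cext_liftD sgD sg0 u v; rewrite !mul0rn !addr0.
have sg2f x : sg2 (f2 x) = omt x by apply: sgf.
have sg2_onto : sg2 @: setT = setT.
  apply/setP => x; rewrite inE; have : x \in sg @: setT by rewrite sg_onto.
  by case/imsetP => u _ ->; apply/imsetP; exists (cext_in q.-1 0 u).
exists (twisted f2D sg2D sg2f), f2; split.
  by apply: twisted_emb sg2_onto => x y /cext_in_inj /f_inj.
by rewrite /= card_cext prednK // (card_additive_dom sgD) sg_onto cardsT ker_sg.
Qed.

Definition imB_sub (X : LMod) : Type := {x : lcar X | x \in imB X}.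

Section SubmoduleImB.
Variable X : LMod.
HB.instance Definition _ := Finite.copy (imB_sub X) {x : lcar X | x \in imB X}.

Definition sub_add (u v : imB_sub X) : imB_sub X :=
  exist _ (val u + val v) (imBD (valP u) (valP v)).
Definition sub_zero : imB_sub X := exist _ 0 (imB0 X).
Definition sub_opp (u : imB_sub X) : imB_sub X := exist _ (- val u) (imBN (valP u)).

Lemma sub_addA : associative sub_add.
Proof. by move=> u v w; apply: val_inj; rewrite /= addrA. Qed.
Lemma sub_addC : commutative sub_add.
Proof. by move=> u v; apply: val_inj; rewrite /= addrC. Qed.
Lemma sub_add0 : left_id sub_zero sub_add.
Proof. by move=> u; apply: val_inj; rewrite /= add0r. Qed.
Lemma sub_addN : left_inverse sub_zero sub_opp sub_add.
Proof. by move=> u; apply: val_inj; rewrite /= addNr. Qed.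

HB.instance Definition _ :=
  GRing.isZmodule.Build (imB_sub X) sub_addA sub_addC sub_add0 sub_addN.

Definition sub_t (u : imB_sub X) : imB_sub X := exist _ (tmap (val u)) (imBt (valP u)).
Lemma sub_tD (u v : imB_sub X) : sub_t (u + v) = sub_t u + sub_t v.
Proof. by apply: val_inj; rewrite /= tmapD. Qed.
Lemma sub_t_inj : injective sub_t.
Proof. by move=> u v [] /tmap_inj uv; apply: val_inj. Qed.

Definition imB_lmod : LMod := LModPack sub_tD (injF_bij sub_t_inj).

Lemma imB_lmod_emb : emb (fun u : lcar imB_lmod => val u).
Proof.
split=> //; first exact: val_inj.
apply/setP => z; apply/imsetP/idP => [[u _ ->] | zB]; first exact: valP.
by exists (exist _ z zB).
Qed.
End SubmoduleImB.

(* If Y = (1-t)X then |Y|^2 <= |X| |(1-t)Y|: indeed |X| = |Y| |ker_X (1-t)|,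
   |Y| = |(1-t)Y| |ker_Y (1-t)| and ker_Y (1-t) embeds in ker_X (1-t). *)
Lemma card_imB_sq (Y X : LMod) (e : lcar Y -> lcar X) : emb e ->
  (#|lcar Y| * #|lcar Y| <= #|lcar X| * #|imB Y|)%N.
Proof.
move=> e_emb.
have ker_le : (#|kerB Y| <= #|kerB X|)%N.
  rewrite -(card_imset _ (emb_inj e_emb)); apply/subset_leq_card/subsetP.
  move=> z /imsetP [y]; rewrite !inE => /eqP y0 ->.
  by rewrite -(emb_omt e_emb) y0 (additive0 (emb_D e_emb)).
rewrite {2}(card_lmod Y) (card_lmod X) -(emb_card e_emb) -mulnA.
by rewrite leq_mul2l [X in (_ <= X)%N]mulnC leq_mul2l ker_le !orbT.
Qed.

Lemma emb_Mcond (p n : nat) (Y X : LMod) (e : lcar Y -> lcar X) :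
  prime p -> #|lcar X| = (p ^ n)%N -> emb e -> Mcond p n Y.
Proof.
move=> p_pr cX e_emb.
have [i _ cY] : exists2 i, (i <= n)%N & #|lcar Y| = (p ^ i)%N.
  by apply/dvdn_pfactor => //; rewrite -cX (card_lmod X) -(emb_card e_emb) dvdn_mulr.
have [j _ cBY] : exists2 j, (j <= i)%N & #|imB Y| = (p ^ j)%N.
  by apply/dvdn_pfactor => //; rewrite -cY (card_lmod Y) dvdn_mulr.
exists i, j; split => //; rewrite -(leq_exp2l _ _ (prime_gt1 p_pr)).
by rewrite mul2n -addnn !expnD -cX -cY -cBY (card_imB_sq e_emb).
Qed.

(* Every N in the family M_{p^n} is (1-t)M_N for some M_N of order p^n: take
   q = p^(n + j - 2i) in the realization, as |N| |ker_N (1-t)| = p^(2i - j). *)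
Lemma exists_good_ext (p n : nat) (N : LMod) : prime p -> Mcond p n N ->
  exists (M : LMod) (f : lcar N -> lcar M), good_ext p n f.
Proof.
move=> p_pr [i [j [cN [cBN ij]]]].
have p_pow_gt0 k : (0 < p ^ k)%N by rewrite expn_gt0 prime_gt0.
have [M [f [[f_hom f_inj f_im] cM]]] := exists_ext N (p_pow_gt0 (n + j - 2 * i)%N).
have ker_pow : (p ^ j * #|kerB N| = p ^ i)%N by rewrite -cBN -cN card_lmod.
exists M, f; split => //; apply/eqP; rewrite -(eqn_pmul2l (p_pow_gt0 j)) cM cN.
rewrite [(p ^ i * _)%N]mulnC !mulnA ker_pow -!expnD.
by apply/eqP; congr (p ^ _)%N; lia.
Qed.

Local Close Scope ring_scope.
Unset Implicit Arguments.
Set Strict Implicit.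

Theorem corollary4p4 (p n : nat) (hp : prime p) (hn : (0 < n)%N)
  (I : Type) (N : I -> LMod) (hN : complete_Mset p n N) :
  (forall i, exists (M : LMod) (f : lcar (N i) -> lcar M), good_ext p n f) /\
  (forall (M : I -> LMod) (f : forall i, lcar (N i) -> lcar (M i)),
     (forall i, good_ext p n (f i)) ->
     (forall i j, qiso (@alex (M i)) (@alex (M j)) -> i = j) /\
     (forall X : LMod, #|lcar X| = (p ^ n)%N ->
        exists i, qiso (@alex X) (@alex (M i)))).
Proof.
case: hN => N_Mcond N_complete N_distinct.
split=> [i | M f f_good]; first exact: exists_good_ext.
have f_emb i : emb (f i) by case: (f_good i).
have cM i : #|lcar (M i)| = (p ^ n)%N by case: (f_good i).
split=> [i j /qiso_imB_iso [g g_iso] | X cX].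
  exact/N_distinct/(liso_of_imB_iso (f_emb i) (f_emb j) g_iso).
have [i BX_i] := N_complete _ (emb_Mcond hp cX (imB_lmod_emb X)).
have [g g_iso] := imB_iso_of_liso (imB_lmod_emb X) (f_emb i) BX_i.
by exists i; apply: (qiso_of_imB_iso _ g_iso); rewrite cX cM.
Qed.
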